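(* Let $K$ be a field and $\nu$ a valuation on $K[x]$. If $\mathbf{Q}\subseteq K[x]$ is a complete set for $\nu$ (not necessarily consisting of key polynomials), then $\mathbf{Q}$ satisfies (GS1$^*$).
   Context: $\nu:K[x]\to\Gamma\cup\{\infty\}$ is a valuation ($\Gamma$ an ordered abelian group) with $\nu(f)=\infty$ only for $f=0$. For monic nonconstant $Q$, the $Q$-expansion of $f$ is the unique expression $f=f_0+f_1Q+\dots+f_nQ^n$ with each $f_i=0$ or $\deg f_i<\deg Q$, and $\nu_Q(f)=\min_i\nu(f_iQ^i)$. A set $\mathbf{Q}$ of monic nonconstant polynomials is complete for $\nu$ if for every nonconstant $f\in K[x]$ there is $Q\in\mathbf{Q}$ with $\deg Q\le\deg f$ and $\nu_Q(f)=\nu(f)$. For finitely supported $\lambda:\mathbf{Q}\to\mathbb{N}_0$ let $\mathbf{Q}^\lambda=\prod_{\lambda(Q)\neq0}Q^{\lambda(Q)}$. (GS1$^*$): for every $f\in K[x]$ there exist $r\ge0$, $a_1,\dots,a_r\in K$ and finitely supported $\lambda_1,\dots,\lambda_r:\mathbf{Q}\to\mathbb{N}_0$ with $f=\sum_{i=1}^ra_i\mathbf{Q}^{\lambda_i}$, $\nu(a_i\mathbf{Q}^{\lambda_i})\ge\nu(f)$ for all $i$, and $\deg Q\le\deg f$ whenever $\lambda_i(Q)\ne0$ for some $i$. *)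

From mathcomp Require Import all_boot all_order all_algebra.
Set Implicit Arguments. Unset Strict Implicit. Unset Printing Implicit Defensive.
Import GRing.Theory.
Local Open Scope ring_scope.

Record ordered_abelian_group (G : zmodType) (le : rel G) : Prop := {
  oag_refl  : forall x, le x x;
  oag_anti  : forall x y, le x y -> le y x -> x = y;
  oag_trans : forall x y z, le x y -> le y z -> le x z;
  oag_total : forall x y, le x y || le y x;
  oag_add   : forall x y z, le x y -> le (x + z) (y + z) }.

(* Gamma u {oo} is encoded as option G, with None = oo. *)
Definition leo (G : zmodType) (le : rel G) (a b : option G) : bool :=
  match a, b with
  | _, None => true
  | None, Some _ => false
  | Some x, Some y => le x y
  end.

Definition addo (G : zmodType) (a b : option G) : option G :=
  match a, b with
  | Some x, Some y => Some (x + y)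
  | _, _ => None
  end.

Definition mino (G : zmodType) (le : rel G) (a b : option G) : option G :=
  if leo le a b then a else b.

Definition is_valuation (K : fieldType) (G : zmodType) (le : rel G)
  (nu : {poly K} -> option G) : Prop :=
  [/\ forall f, nu f = None <-> f = 0,
      forall f g, nu (f * g) = addo (nu f) (nu g)
    & forall f g, leo le (mino le (nu f) (nu g)) (nu (f + g))].

(* i-th coefficient f_i of the Q-expansion f = sum_i f_i Q^i
   (obtained by iterated Euclidean division by Q). *)
Definition qexp_coef (K : fieldType) (Q f : {poly K}) (i : nat) : {poly K} :=
  (f %/ Q ^+ i) %% Q.

(* nu_Q(f) = min_i nu(f_i Q^i); the terms with i >= size f are 0. *)
Definition nuQ (K : fieldType) (G : zmodType) (le : rel G)
  (nu : {poly K} -> option G) (Q f : {poly K}) : option G :=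
  foldr (fun i acc => mino le (nu (qexp_coef Q f i * Q ^+ i)) acc) None
        (iota 0 (size f).+1).

(* Q is complete for nu. Degrees are compared via size = deg + 1. *)
Definition complete_set (K : fieldType) (G : zmodType) (le : rel G)
  (nu : {poly K} -> option G) (Qs : pred {poly K}) : Prop :=
  forall f : {poly K}, (1 < size f)%N ->
    exists2 Q, Q \in Qs & (size Q <= size f)%N /\ nuQ le nu Q f = nu f.

(* Q^lambda = prod_{lambda(Q) != 0} Q^lambda(Q), for lambda with support
   contained in the duplicate-free list s. *)
Definition qmonom (K : fieldType) (s : seq {poly K}) (lam : {poly K} -> nat)
  : {poly K} := \prod_(Q <- s) Q ^+ lam Q.

Definition GS1star (K : fieldType) (G : zmodType) (le : rel G)
  (nu : {poly K} -> option G) (Qs : pred {poly K}) : Prop :=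
  forall f : {poly K},
    exists (r : nat) (a : 'I_r -> K) (lam : 'I_r -> {poly K} -> nat)
           (supp : 'I_r -> seq {poly K}),
 [/\ (forall i, uniq (supp i)) /\
          (forall i Q, lam i Q != 0%N -> Q \in supp i),
          forall i Q, lam i Q != 0%N -> Q \in Qs,
          f = \sum_(i < r) a i *: qmonom (supp i) (lam i),
          forall i, leo le (nu f) (nu (a i *: qmonom (supp i) (lam i)))
        & forall i Q, lam i Q != 0%N -> (size Q <= size f)%N].

From mathcomp Require Import all_boot all_order all_algebra.
From mathcomp Require Import ring zify.
Set Implicit Arguments. Unset Strict Implicit. Unset Printing Implicit Defensive.
Import GRing.Theory.
Local Open Scope ring_scope.

(* A "Q-term" is a scalar times a finite product of elements of Q (a list of
   factors, repetitions allowed).  Call a polynomial g (b,n)-expandable if it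
   is a sum of Q-terms each of valuation >= b whose factors have size <= n.
   We show by strong induction on size f that every f is
   (nu f, size f)-expandable: constants are their own Q-term; for nonconstant
   f, completeness yields Q in Q with deg Q <= deg f and nu f = nu_Q f, so in
   the Q-expansion f = sum_i f_i Q^i every term has nu (f_i Q^i) >= nu f, and
   each coefficient f_i, of degree < deg Q, is expandable by induction;
   multiplying its Q-terms by Q^i keeps them admissible.  Finally the list of
   factors of each Q-term is turned into an exponent function lambda on its
   support (its duplicate-free list of factors), which is (GS1-star). *)

Section ExtendedOrder.
Variables (G : zmodType) (le : rel G).
Hypothesis HG : ordered_abelian_group le.

Lemma leo_refl a : leo le a a.
Proof. by case: a => //= x; apply: oag_refl HG x. Qed.

Lemma leo_trans a b c : leo le a b -> leo le b c -> leo le a c.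
Proof. by case: a => [x|]; case: b => [y|]; case: c => [z|] //=; apply: oag_trans. Qed.

Lemma leo_min_l a b : leo le (mino le a b) a.
Proof.
rewrite /mino; case: ifP => [_|]; first exact: leo_refl.
case: a => [x|]; case: b => [y|] //= nle_xy.
by have := oag_total HG x y; rewrite nle_xy.
Qed.

Lemma leo_min_r a b : leo le (mino le a b) b.
Proof. by rewrite /mino; case: ifP => // _; apply: leo_refl. Qed.

Lemma leo_addo a b c : leo le a b -> leo le (addo a c) (addo b c).
Proof. by case: a => [x|]; case: b => [y|]; case: c => [z|] //=; apply: oag_add. Qed.

Lemma foldr_mino_le (F : nat -> option G) (l : seq nat) i : i \in l ->
  leo le (foldr (fun j acc => mino le (F j) acc) None l) (F i).
Proof.
elim: l => //= j l IHl; rewrite in_cons => /predU1P [-> | il].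
  exact: leo_min_l.
exact: leo_trans (leo_min_r _ _) (IHl il).
Qed.

End ExtendedOrder.

Section QExpansion.
Variable K : fieldType.
Implicit Types Q f : {poly K}.

Lemma qexpansion_partial Q f m :
  f = \sum_(i < m) qexp_coef Q f i * Q ^+ i + f %/ Q ^+ m * Q ^+ m.
Proof.
elim: m => [|m IHm]; first by rewrite big_ord0 expr0 divp1 mulr1 add0r.
rewrite big_ord_recr /= {1}IHm.
have divQ := divp_eq (f %/ Q ^+ m) Q.
rewrite divp_divl -exprSr in divQ.
by rewrite {1}divQ /qexp_coef exprSr; ring.
Qed.

Lemma qexpansion Q f : (1 < size Q)%N ->
  f = \sum_(i < (size f).+1) qexp_coef Q f i * Q ^+ i.
Proof.
move=> Q_gt1; rewrite {1}(qexpansion_partial Q f (size f).+1).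
suff /divp_small -> : (size f < size (Q ^+ (size f).+1))%N by rewrite mul0r addr0.
have := size_exp Q (size f).+1.
have : (1 <= (size Q).-1)%N by lia.
move: (size Q).-1 (size (Q ^+ _)) => d s d_ge1 sE.
have : ((size f).+1 <= d * (size f).+1)%N by rewrite leq_pmull.
lia.
Qed.

Lemma size_qexp_coef Q f i : Q != 0 -> (size (qexp_coef Q f i) < size Q)%N.
Proof. by move=> Q0; rewrite /qexp_coef ltn_modp. Qed.

End QExpansion.

Section MonomialExpansion.
Variables (K : fieldType) (G : zmodType) (le : rel G).
Hypothesis HG : ordered_abelian_group le.
Variable nu : {poly K} -> option G.
Hypothesis Hnu : is_valuation le nu.
Variable Qs : pred {poly K}.
Implicit Types f g Q : {poly K}.

Lemma nuM f g : nu (f * g) = addo (nu f) (nu g).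
Proof. by case: Hnu. Qed.

Lemma nuQ_le_term Q f i : (i <= size f)%N ->
  leo le (nuQ le nu Q f) (nu (qexp_coef Q f i * Q ^+ i)).
Proof. by move=> le_if; apply: foldr_mino_le => //; rewrite mem_iota. Qed.

Definition qterm (t : K * seq {poly K}) : {poly K} := t.1 *: \prod_(P <- t.2) P.

Definition admissible (b : option G) (n : nat) (t : K * seq {poly K}) : bool :=
  [&& leo le b (nu (qterm t)), all [in Qs] t.2
    & all (fun P : {poly K} => (size P <= n)%N) t.2].

Definition expandable (b : option G) (n : nat) (g : {poly K}) : Prop :=
  exists ts, g = \sum_(t <- ts) qterm t /\ all (admissible b n) ts.

Lemma expandable_const b n (c : K) : leo le b (nu c%:P) -> expandable b n c%:P.
Proof.
move=> le_b; exists [:: (c, [::])].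
by rewrite big_seq1 /admissible /qterm /= big_nil alg_polyC le_b.
Qed.

Lemma expandable_sum b n (I : Type) (r : seq I) (F : I -> {poly K}) :
  (forall i, expandable b n (F i)) -> expandable b n (\sum_(i <- r) F i).
Proof.
move=> expF; elim: r => [|i r [ts [sumE ts_adm]]].
  by exists [::]; rewrite !big_nil.
have [ts' [FiE ts'_adm]] := expF i.
by exists (ts' ++ ts); rewrite big_cons big_cat all_cat FiE sumE ts'_adm ts_adm.
Qed.

Lemma expandable_weaken b b' n n' g :
  leo le b' b -> (n <= n')%N -> expandable b n g -> expandable b' n' g.
Proof.
move=> le_b le_n [ts [-> ts_adm]]; exists ts; split => //.
apply/allP => t /(allP ts_adm) /and3P [nu_t t_Qs t_size].
rewrite /admissible (leo_trans HG le_b nu_t) t_Qs /=.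
by apply/allP => P /(allP t_size) /leq_trans; apply.
Qed.

Lemma expandable_mulQ n g Q m : Q \in Qs -> (size Q <= n)%N ->
  expandable (nu g) n g -> expandable (nu (g * Q ^+ m)) n (g * Q ^+ m).
Proof.
move=> QQs size_Q [ts [-> ts_adm]].
have qterm_mulQ t : qterm t * Q ^+ m = qterm (t.1, t.2 ++ nseq m Q).
  by rewrite /qterm /= big_cat /= big_nseq iter_mulr_1 scalerAl.
exists [seq (t.1, t.2 ++ nseq m Q) | t <- ts]; split.
  by rewrite big_map mulr_suml; apply: eq_bigr => t _; apply: qterm_mulQ.
rewrite all_map; apply/allP => t /(allP ts_adm) /and3P [nu_t t_Qs t_size].
rewrite /admissible /= -qterm_mulQ !nuM !all_cat t_Qs t_size.
by rewrite leo_addo //= !all_nseq QQs size_Q !orbT.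
Qed.

Hypothesis Qs_nonconst : forall Q, Q \in Qs -> (1 < size Q)%N.
Hypothesis Hcomplete : complete_set le nu Qs.

Lemma expandable_self f : expandable (nu f) (size f) f.
Proof.
elim: {f}(size f).+1 {-2}f (ltnSn (size f)) => // N IHN f size_f.
have [f_const | f_nonconst] := leqP (size f) 1.
  by rewrite [f]size1_polyC //; apply/expandable_const/leo_refl.
have [Q QQs [size_Q nuQ_f]] := Hcomplete f_nonconst.
have Q_gt1 := Qs_nonconst QQs.
have Q0 : Q != 0 by rewrite -size_poly_gt0 ltnW.
rewrite [X in expandable _ _ X](qexpansion f Q_gt1); apply: expandable_sum => i.
set c := qexp_coef Q f i.
have size_c : (size c < size f)%N := leq_trans (size_qexp_coef f i Q0) size_Q.
apply: (@expandable_weaken (nu (c * Q ^+ i)) _ (size f)) => //.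
  by rewrite -nuQ_f nuQ_le_term // -ltnS.
apply: expandable_mulQ => //.
exact: expandable_weaken (leo_refl HG _) (ltnW size_c) (IHN c (leq_trans size_c _)).
Qed.

End MonomialExpansion.

Theorem proposition5p2 (K : fieldType) (G : zmodType) (le : rel G)
  (HG : ordered_abelian_group le) (nu : {poly K} -> option G)
  (Hnu : is_valuation le nu) (Qs : pred {poly K})
  (HQs : forall Q, Q \in Qs -> Q \is monic /\ (1 < size Q)%N)
  (Hcomplete : complete_set le nu Qs) :
  GS1star le nu Qs.
Proof.
move=> f.
have Qs_nonconst Q (QQs : Q \in Qs) : (1 < size Q)%N := (HQs Q QQs).2.
have [ts [f_sum ts_adm]] := expandable_self HG Hnu Qs_nonconst Hcomplete f.
pose t i := nth (0, [::]) ts i.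
have qmonomE i : qmonom (undup (t i).2) (fun P => count_mem P (t i).2)
    = \prod_(P <- (t i).2) P by rewrite /qmonom prodr_undup_exp_count.
have t_adm (i : 'I_(size ts)) : admissible le nu Qs (nu f) (size f) (t i).
  exact/(all_nthP (0, [::]) ts_adm).
have factor (i : 'I_(size ts)) P : count_mem P (t i).2 != 0%N -> P \in (t i).2.
  by apply: contraR => /count_memPn ->.
exists (size ts), (fun i => (t i).1), (fun i P => count_mem P (t i).2),
  (fun i => undup (t i).2); split.
- by split=> [i | i P /factor]; rewrite ?undup_uniq ?mem_undup.
- by move=> i P /factor; have /and3P [_ /allP + _] := t_adm i; apply.
- by rewrite {1}f_sum (big_nth (0, [::])) big_mkord; apply: eq_bigr => i _; rewrite qmonomE.
- by move=> i; rewrite qmonomE; have /and3P [] := t_adm i.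
- by move=> i P /factor; have /and3P [_ _ /allP] := t_adm i; apply.
Qed.
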